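(* Let $t\ge 2$ and $n\ge t+5$ be integers with $n-t\equiv 2\pmod 3$. Then $\rho\big(K_1\vee (K_{1,t}\cup \tfrac{n-t-2}{3}K_3)\big)<\rho(K_{1,1,n-2})$.
   Context: $\rho$ denotes the spectral radius (largest adjacency eigenvalue). $G\vee H$ is the join of disjoint graphs $G$ and $H$ (disjoint union plus all edges between them), $G\cup H$ is the disjoint union, $kG$ denotes $k$ disjoint copies of $G$, $K_{1,t}$ is the star with $t$ leaves, and $K_{1,1,n-2}$ is the complete tripartite graph with parts of sizes $1,1,n-2$. *)

From HB Require Import structures.
From mathcomp Require Import all_boot all_order all_algebra.
From mathcomp Require Import classical_sets reals.
Set Implicit Arguments. Unset Strict Implicit. Unset Printing Implicit Defensive.
Import Order.TTheory GRing.Theory Num.Theory.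
Local Open Scope ring_scope.
Local Open Scope classical_set_scope.

(* Simple graphs are symmetric irreflexive relations on a finite vertex type. *)

Definition complete_graph (m : nat) : rel 'I_m := fun x y => x != y.

Definition star_graph (t : nat) : rel 'I_t.+1 :=
  fun x y => ((x == ord0) && (y != ord0)) || ((y == ord0) && (x != ord0)).

Definition graph_union (T U : finType) (e : rel T) (f : rel U) : rel (T + U) :=
  fun x y => match x, y with
             | inl a, inl b => e a b
             | inr a, inr b => f a b
             | _, _ => false
             end.

Definition graph_join (T U : finType) (e : rel T) (f : rel U) : rel (T + U) :=
  fun x y => match x, y with
             | inl a, inl b => e a b
             | inr a, inr b => f a b
             | _, _ => true
             end.

Definition graph_copies (k : nat) (T : finType) (e : rel T) : rel ('I_k * T) :=
  fun x y => (x.1 == y.1) && e x.2 y.2.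

Definition tri_part (a b c : nat) (x : 'I_a + 'I_b + 'I_c) : nat :=
  match x with inl (inl _) => 0%N | inl (inr _) => 1%N | inr _ => 2%N end.
Definition complete_tripartite (a b c : nat) : rel ('I_a + 'I_b + 'I_c) :=
  fun x y => tri_part x != tri_part y.

Definition adj_mx (R : realType) (T : finType) (e : rel T) : 'M[R]_#|T| :=
  \matrix_(i, j) (e (enum_val i) (enum_val j))%:R.

Definition spec_rad (R : realType) (T : finType) (e : rel T) : R :=
  sup [set x : R | eigenvalue (adj_mx R e) x].
Arguments complete_graph m : clear implicits.
Arguments star_graph t : clear implicits.
Arguments complete_tripartite a b c : clear implicits.
Arguments graph_copies k [T] e.
Arguments spec_rad R [T] e.

From mathcomp Require Import all_boot all_order all_algebra.
From mathcomp Require Import boolp classical_sets reals.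
From mathcomp Require Import ring lra zify.
Set Implicit Arguments. Unset Strict Implicit. Unset Printing Implicit Defensive.
Import Order.TTheory GRing.Theory Num.Theory.
Local Open Scope ring_scope.

(* Let k = (n - t - 2)/3, m = n - 2 = t + 3k, and s > 0 with s^2 = s + 2m.
   The vector equal to 1 on the two dominating vertices of K_{1,1,m} and to
   2/s elsewhere is an eigenvector for s, so s <= rho(K_{1,1,m}).  In the cone
   G = K_1 v (K_{1,t} u k K_3), solving the eigen-equations for s at every
   vertex but the apex, with apex weight 1, leaves a load < s on the apex.
   Lowering the apex weight slightly gives a positive w with A w < s w
   componentwise, and the Collatz-Wielandt bound yields rho(G) < s. *)

Lemma sum_enum_val (V : nmodType) (T : finType) (F : T -> V) :
  \sum_(x : T) F x = \sum_(i < #|T|) F (enum_val i).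
Proof. exact: (reindex _ (onW_bij _ (enum_val_bij T))). Qed.

Lemma nonneg_eigenvalue_le (R : realFieldType) m (A : 'M[R]_m) (w : 'I_m -> R) (mu lam : R) :
  (forall i j, 0 <= A i j) -> (forall i, 0 < w i) ->
  (forall j, \sum_i A i j * w i <= mu * w j) -> eigenvalue A lam -> lam <= mu.
Proof.
move=> A_ge0 w_gt0 Aw_le /eigenvalueP [v lam_v v_neq0].
have [j0 vj0_neq0] : exists j, v 0 j != 0.
  apply/existsP; apply: contraR v_neq0; rewrite negb_exists => /forallP v0.
  by apply/eqP/matrixP => i j; rewrite (ord1 i) mxE; apply/eqP/negbNE/v0.
pose F j := `|v 0 j| / w j.
pose j := [arg max_(j > j0) F j]%O.
have F_le i : F i <= F j by rewrite /j; case: arg_maxP => //= ? _; apply.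
have Fj_gt0 : 0 < F j by apply: lt_le_trans (F_le j0); rewrite divr_gt0 ?normr_gt0.
have vj_gt0 : 0 < `|v 0 j| by move: Fj_gt0; rewrite pmulr_lgt0 // invr_gt0.
have lam_vj : lam * v 0 j = \sum_i v 0 i * A i j.
  by move/matrixP: lam_v => /(_ 0 j); rewrite !mxE.
suff : `|lam| * `|v 0 j| <= mu * `|v 0 j|.
  by rewrite ler_pM2r //; apply: le_trans (ler_norm lam).
rewrite -normrM lam_vj; apply: le_trans (ler_norm_sum _ _ _) _.
apply: (@le_trans _ _ (\sum_i F j * (A i j * w i))).
  apply: ler_sum => i _; rewrite normrM (ger0_norm (A_ge0 i j)).
  rewrite [F j * _]mulrCA [`|v 0 i| * _]mulrC ler_wpM2l //.
  by rewrite -ler_pdivrMr // F_le.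
rewrite -mulr_sumr; apply: le_trans (ler_wpM2l (ltW Fj_gt0) (Aw_le j)) _.
by rewrite /F mulrCA divfK ?gt_eqF.
Qed.

Section SpectralRadius.
Variable R : realType.

Lemma adj_eigenvalue_le (T : finType) (e : rel T) (w : T -> R) mu lam :
  (forall x, 0 < w x) -> (forall y, \sum_x (e x y)%:R * w x <= mu * w y) ->
  eigenvalue (adj_mx R e) lam -> lam <= mu.
Proof.
move=> w_gt0 Aw_le; apply: (nonneg_eigenvalue_le (w := fun i => w (enum_val i))) => //.
- by move=> i j; rewrite mxE ler0n.
- move=> j; apply: le_trans (Aw_le (enum_val j)); rewrite [leRHS]sum_enum_val.
  by under eq_bigr do rewrite mxE.
Qed.

Lemma adj_eigenvalue_of_eigenfun (T : finType) (e : rel T) (v : T -> R) lam :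
  (exists x, v x != 0) -> (forall y, \sum_x v x * (e x y)%:R = lam * v y) ->
  eigenvalue (adj_mx R e) lam.
Proof.
move=> [x0 vx0_neq0] Av; apply/eigenvalueP; exists (\row_i v (enum_val i)).
  apply/matrixP => i j; rewrite (ord1 i) !mxE -Av [RHS]sum_enum_val.
  by apply: eq_bigr => k _; rewrite !mxE.
apply: contraNneq vx0_neq0 => /matrixP /(_ 0 (enum_rank x0)).
by rewrite !mxE enum_rankK => ->.
Qed.

Lemma spec_rad_le (T : finType) (e : rel T) mu :
  0 <= mu -> (forall lam, eigenvalue (adj_mx R e) lam -> lam <= mu) ->
  spec_rad R e <= mu.
Proof.
move=> mu_ge0 eig_le; rewrite /spec_rad.
have [[x eig_x] | no_eig] :=
  pselect ([set x : R | eigenvalue (adj_mx R e) x] !=set0)%classic.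
  by apply: ge_sup; [exists x | move=> y; apply: eig_le].
suff -> : [set x : R | eigenvalue (adj_mx R e) x]%classic = set0%classic.
  by rewrite sup0.
by apply/seteqP; split => // x eig_x; apply: no_eig; exists x.
Qed.

Lemma eigenvalue_le_spec_rad (T : finType) (e : rel T) lam :
  eigenvalue (adj_mx R e) lam -> lam <= spec_rad R e.
Proof.
move=> eig_lam; apply: ub_le_sup => //; exists #|T|%:R => x /=.
apply: (adj_eigenvalue_le (w := fun _ => 1)) => // y.
rewrite mulr1 -sum1_card natr_sum; apply: ler_sum => z _.
by rewrite mulr1 lern1 leq_b1.
Qed.

Lemma spec_rad_lt (T : finType) (e : rel T) (w : T -> R) s :
  0 < s -> (forall x, 0 < w x) ->
  (forall y, \sum_x (e x y)%:R * w x < s * w y) -> spec_rad R e < s.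
Proof.
move=> s_gt0 w_gt0 Aw_lt.
pose mu := \big[Num.max/0]_y ((\sum_x (e x y)%:R * w x) / w y).
apply: (@le_lt_trans _ _ mu).
  apply: spec_rad_le; first exact: bigmax_ge_id.
  move=> lam; apply: (adj_eigenvalue_le w_gt0) => y.
  by rewrite -ler_pdivrMr //; apply: le_bigmax.
by apply: bigmax_lt => // y _; rewrite ltr_pdivrMr.
Qed.

Lemma complete_tripartite11_eigenvalue m (s : R) :
  0 < s -> s ^+ 2 = s + 2 * m%:R ->
  eigenvalue (adj_mx R (complete_tripartite 1 1 m)) s.
Proof.
move=> s_gt0 s_root; have s_neq0 : s != 0 by rewrite gt_eqF.
have m_eq : m%:R = (s ^+ 2 - s) / 2 :> R by rewrite s_root; field.
apply: (adj_eigenvalue_of_eigenfun (v := fun x => if x is inl _ then 1 else 2 / s)).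
  by exists (inl (inl ord0)); rewrite oner_eq0.
move=> y; rewrite !big_sumType !big_ord1.
case: y => [[y|y]|y]; rewrite /complete_tripartite /= ?mulr0 ?big1_eq ?mulr1.
1,2: by rewrite sumr_const card_ord -[_ *+ m]mulr_natr m_eq; field.
by field.
Qed.

End SpectralRadius.

Lemma exists_pos_root (R : rcfType) (m : R) :
  0 <= m -> exists2 s : R, 0 < s & s ^+ 2 = s + 2 * m.
Proof.
move=> m_ge0; pose q := Num.sqrt (1 + 8 * m).
have q_ge0 : 0 <= q := sqrtr_ge0 _.
have q2 : q ^+ 2 = 1 + 8 * m by rewrite sqr_sqrtr //; lra.
exists ((1 + q) / 2); first lra.
have -> : ((1 + q) / 2) ^+ 2 = (1 + 2 * q + q ^+ 2) / 4 by field.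
by rewrite q2; field.
Qed.

Lemma cone_apex_load_lt (R : realFieldType) (s tt kk : R) :
  2 <= tt -> 1 <= kk -> 0 < s -> s ^+ 2 = s + 2 * tt + 6 * kk ->
  (s + tt) / (s ^+ 2 - tt) + tt * ((s + 1) / (s ^+ 2 - tt)) + 3 * kk * (s - 2)^-1 < s.
Proof.
move=> tt_ge2 kk_ge1 s_gt0 s_root.
have s_gt2 : 2 < s by nra.
have s_lt : s < 3 * tt + 6 * kk - 4 by nra.
rewrite s_root -subr_gt0.
set D := s + 2 * tt + 6 * kk - tt.
have -> : s - ((s + tt) / D + tt * ((s + 1) / D) + 3 * kk * (s - 2)^-1)
  = ((s + 6 * kk - 2) * (s ^+ 2 - s - 2 * tt - 6 * kk) + 3 * kk * (3 * tt + 6 * kk - 4 - s))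
    / (D * (s - 2)).
  by rewrite /D; field; lra.
rewrite s_root; apply: divr_gt0; last by apply: mulr_gt0; rewrite /D; lra.
nra.
Qed.

Lemma sum_pairE (V : nmodType) (I J : finType) (F : I * J -> V) :
  \sum_p F p = \sum_i \sum_j F (i, j).
Proof. by rewrite pair_bigA; apply: eq_bigr => -[]. Qed.

Section ConeOverStarAndTriangles.
Variables (R : realType) (t k : nat).

Definition cone_star_triangles :=
  graph_join (complete_graph 1)
    (graph_union (star_graph t) (graph_copies k (complete_graph 3))).

Definition cone_weight (a wc wl wt : R) (x : 'I_1 + ('I_t.+1 + ('I_k * 'I_3))) :=
  match x with
  | inl _ => a
  | inr (inl i) => if i == ord0 then wc else wl
  | inr (inr _) => wt
  end.

Lemma cone_weight_sum a wc wl wt y :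
  \sum_x (cone_star_triangles x y)%:R * cone_weight a wc wl wt x =
  match y with
  | inl _ => wc + t%:R * wl + 3 * k%:R * wt
  | inr (inl i) => if i == ord0 then a + t%:R * wl else a + wc
  | inr (inr _) => a + 2 * wt
  end.
Proof.
have lift0_neq0 (i : 'I_t) : (lift ord0 i == ord0) = false.
  by apply/negbTE; rewrite eq_sym neq_lift.
rewrite !big_sumType big_ord1 big_ord_recl sum_pairE /=.
case: y => [y|[y|[p q]]] /=.
- by rewrite (ord1 y) /complete_graph eqxx /= !sumr_const !card_ord; ring.
- case: (unliftP ord0 y) => [j ->|->]; rewrite /star_graph ?lift0_neq0 ?eqxx /=;
    by rewrite !sumr_const !card_ord; ring.
- have -> : \sum_(i < k) \sum_(j < 3)
      (graph_copies k (complete_graph 3) (i, j) (p, q))%:R * wt = 2 * wt.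
    rewrite (bigD1 p) //= [X in _ + X = _]big1 => [|i /negbTE i_neq_p]; last first.
      by apply: big1 => j _; rewrite /graph_copies /= i_neq_p mul0r.
    rewrite /graph_copies /= eqxx /= !big_ord_recl big_ord0 /complete_graph.
    by case: q => [[|[|[|q]]] ?] //=; ring.
  by rewrite !sumr_const !card_ord; ring.
Qed.

Lemma spec_rad_cone_lt_of_weights (s a wc wl wt : R) :
  0 < s -> 0 < a -> 0 < wc -> 0 < wl -> 0 < wt ->
  wc + t%:R * wl + 3 * k%:R * wt < s * a -> a + t%:R * wl < s * wc ->
  a + wc < s * wl -> a + 2 * wt < s * wt ->
  spec_rad R cone_star_triangles < s.
Proof.
move=> s_gt0 a_gt0 wc_gt0 wl_gt0 wt_gt0 apex centre leaf triangle.
apply: (spec_rad_lt (w := cone_weight a wc wl wt)) => //.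
- by move=> [y|[y|y]] //=; case: ifP.
- by move=> [y|[y|y]]; rewrite cone_weight_sum //=; case: ifP.
Qed.

Lemma spec_rad_cone_lt (s : R) : (2 <= t)%N -> (1 <= k)%N -> 0 < s ->
  s ^+ 2 = s + 2 * (t + 3 * k)%:R -> spec_rad R cone_star_triangles < s.
Proof.
move=> t_ge2 k_ge1 s_gt0 s_root_nat.
have s_root : s ^+ 2 = s + 2 * t%:R + 6 * k%:R by rewrite s_root_nat natrD natrM; ring.
have tt_ge2 : 2 <= t%:R :> R by rewrite (ler_nat R 2 t).
have kk_ge1 : 1 <= k%:R :> R by rewrite (ler_nat R 1 k).
have s_gt2 : 2 < s by nra.
have D_gt0 : 0 < s ^+ 2 - t%:R by nra.
(* The solution of the eigen-equations at the centre, the leaves and the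
   triangles when the apex has weight 1. *)
pose wc := (s + t%:R) / (s ^+ 2 - t%:R).
pose wl := (s + 1) / (s ^+ 2 - t%:R).
pose wt := (s - 2)^-1.
pose load := wc + t%:R * wl + 3 * k%:R * wt.
have load_lt : load < s by apply: cone_apex_load_lt.
have wc_gt0 : 0 < wc by apply: divr_gt0; lra.
have wl_gt0 : 0 < wl by apply: divr_gt0; lra.
have wt_gt0 : 0 < wt by rewrite invr_gt0; lra.
have centre_eq : s * wc = 1 + t%:R * wl by rewrite /wc /wl; field; lra.
have leaf_eq : s * wl = 1 + wc by rewrite /wc /wl; field; lra.
have triangle_eq : s * wt = 1 + 2 * wt by rewrite /wt; field; lra.
pose a := (s + load) / (2 * s).
have a_gt0 : 0 < a by apply: divr_gt0; rewrite /load; nra.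
have a_lt1 : a < 1 by rewrite /a ltr_pdivrMr; lra.
have apex : load < s * a.
  have -> : s * a = (s + load) / 2 by rewrite /a; field; lra.
  lra.
apply: (@spec_rad_cone_lt_of_weights s a wc wl wt) => //; lra.
Qed.

End ConeOverStarAndTriangles.

Theorem lemma4p6 (R : realType) (t n : nat) :
  (2 <= t)%N -> (t + 5 <= n)%N -> ((n - t) %% 3 = 2)%N ->
  spec_rad R (graph_join (complete_graph 1%N)
                (graph_union (star_graph t)
                   (graph_copies ((n - t - 2) %/ 3) (complete_graph 3%N))))
  < spec_rad R (complete_tripartite 1%N 1%N (n - 2)%N).
Proof.
move=> t_ge2 n_ge mod3.
set k := ((n - t - 2) %/ 3)%N.
have k_ge1 : (1 <= k)%N by rewrite /k; lia.
have m_eq : (n - 2 = t + 3 * k)%N by rewrite /k; lia.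
have [s s_gt0 s_root] := exists_pos_root (ler0n R (n - 2)).
apply: (@lt_le_trans _ _ s).
  by apply: spec_rad_cone_lt; rewrite -?m_eq.
exact/eigenvalue_le_spec_rad/complete_tripartite11_eigenvalue.
Qed.
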